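(* Let $f\colon Y\to X$ be a homeomorphism which is a cellular refinement of CW-complexes, and let $\mathcal{F}$ be a cellular cosheaf on $X$. Then $|f^*\mathcal{F}|\cong|\mathcal{F}|$.
   Context: For a CW-complex $X$ with set of cells $I$, $I$ is a poset generated by $i<j$ whenever the interior of cell $i$ meets the boundary of cell $j$; $d(i)$ is the dimension of cell $i$, so $X=(\coprod_{i\in I}D^{d(i)})/\sim$. A cellular cosheaf on $X$ is a contravariant functor $\mathcal{F}\colon I\to\mathrm{Top}$. Its realization is $|\mathcal{F}|=(\coprod_{i\in I}\mathcal{F}(i)\times D^{d(i)})/\sim$, where $(a_1,x_1)\sim(a_2,x_2)$ for $x_1\in D^{d(i)}$, $x_2\in\partial D^{d(j)}$, $i<j$, $x_1$ and $x_2$ identified in $X$, and $a_2\mapsto a_1$ under $\mathcal{F}(j)\to\mathcal{F}(i)$. A cellular refinement is a homeomorphism $f\colon Y\to X$ such that every open cell of $Y$ maps into the interior of a cell of $X$, giving a poset map $f_*\colon J\to I$ on cell posets; $f^*\mathcal{F}=\mathcal{F}\circ f_*$. *)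

From HB Require Import structures.
From mathcomp Require Import all_boot all_order all_algebra.
From mathcomp Require Import all_classical all_reals all_analysis.
From Stdlib Require Import Relation_Operators List.

Set Implicit Arguments.
Unset Strict Implicit.
Unset Printing Implicit Defensive.

Import Order.TTheory GRing.Theory Num.Theory.
Import numFieldNormedType.Exports.
Local Open Scope classical_set_scope.
Local Open Scope ring_scope.

Definition sqnorm (R : realType) (n : nat) (v : 'rV[R]_n) : R :=
  \sum_(k < n) (v ord0 k) ^+ 2.

Definition disk (R : realType) (n : nat) : set 'rV[R]_n :=
  [set v | sqnorm v <= 1].
Definition odisk (R : realType) (n : nat) : set 'rV[R]_n :=
  [set v | sqnorm v < 1].
Definition sphere (R : realType) (n : nat) : set 'rV[R]_n :=
  [set v | sqnorm v = 1].
Arguments disk R n : clear implicits.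
Arguments odisk R n : clear implicits.
Arguments sphere R n : clear implicits.

Unset Implicit Arguments.
Record cw_structure (R : realType) (X : topologicalType) (I : Type) := CW {
  cw_dim : I -> nat;
  cw_char : forall i, 'rV[R]_(cw_dim i) -> X;
  cw_char_cont : forall i, {within disk R (cw_dim i), continuous (cw_char i)};
  cw_char_inj : forall i (u v : 'rV[R]_(cw_dim i)),
      odisk R _ u -> odisk R _ v -> cw_char i u = cw_char i v -> u = v;
  cw_cover : forall x : X, exists i, (cw_char i @` odisk R _) x;
  cw_disjoint : forall i j (x : X),
      (cw_char i @` odisk R _) x -> (cw_char j @` odisk R _) x -> i = j;
  cw_closure_finite : forall i, exists s : list I,
      (forall j, List.In j s -> (cw_dim j < cw_dim i)%N) /\
      (cw_char i @` sphere R _ `<=` [set x | exists2 j, List.In j s &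
                                              (cw_char j @` odisk R _) x]);
  cw_weak : forall A : set X,
      closed A <-> (forall i, closed (disk R _ `&` cw_char i @^-1` A));
  cw_hausdorff : hausdorff_space X
}.
Set Implicit Arguments.
Arguments cw_dim {R X I} c i.
Arguments cw_char {R X I} c i _.

Section CellPoset.
Context (R : realType) (X : topologicalType) (I : Type) (C : cw_structure R X I).

Definition ocell (i : I) : set X := cw_char C i @` odisk R (cw_dim C i).
Definition bcell (i : I) : set X := cw_char C i @` sphere R (cw_dim C i).

Definition cw_gen (i j : I) : Prop := exists x, ocell i x /\ bcell j x.
Definition cw_lt : I -> I -> Prop := clos_trans I cw_gen.
Definition cw_le : I -> I -> Prop := clos_refl_trans I cw_gen.
End CellPoset.

(* Cellular cosheaves: contravariant functors from the cell poset to   *)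
Record cosheaf (R : realType) (X : topologicalType) (I : Type)
    (C : cw_structure R X I) := Cosheaf {
  cs_sp : I -> topologicalType;
  cs_res : forall i j, cw_le C i j -> cs_sp j -> cs_sp i;
  cs_res_cont : forall i j (p : cw_le C i j), continuous (cs_res p);
  cs_res_id : forall i (p : cw_le C i i) a, cs_res p a = a;
  cs_res_comp : forall i j k (p : cw_le C i k) (q : cw_le C i j)
      (r : cw_le C j k) a, cs_res p a = cs_res q (cs_res r a)
}.

Record space := Space { sp_car : Type; sp_open : set (set sp_car) }.
Arguments sp_open : clear implicits.

Definition homeomorphic (A B : space) : Prop :=
  exists (g : sp_car A -> sp_car B) (h : sp_car B -> sp_car A),
    cancel g h /\ cancel h g /\
    (forall U, sp_open B U -> sp_open A (g @^-1` U)) /\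
    (forall U, sp_open A U -> sp_open B (h @^-1` U)).

(* Realization  |G| = (coprod_i G(i) x D^{d(i)}) / ~ , for a family of  *)
(* spaces G over the cells and a relation  rel i j a2 a1  meaning       *)
(* "a2 |-> a1 under G(j) -> G(i)".  Topology: quotient of the disjoint *)
(* union of the (subspace-of-product) topologies on G(i) x D^{d(i)}.    *)
Section Realization.
Context (R : realType) (X : topologicalType) (I : Type) (C : cw_structure R X I).
Context (G : I -> topologicalType)
        (rel : forall i j : I, G j -> G i -> Prop).

Definition rpt := {i : I & (G i * 'rV[R]_(cw_dim C i))%type}.

Definition rvalid (p : rpt) : Prop := disk R _ (projT2 p).2.

Definition rgen (p q : rpt) : Prop :=
  cw_lt C (projT1 p) (projT1 q) /\
  disk R _ (projT2 p).2 /\ sphere R _ (projT2 q).2 /\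
  cw_char C _ (projT2 p).2 = cw_char C _ (projT2 q).2 /\
  @rel (projT1 p) (projT1 q) (projT2 q).1 (projT2 p).1.

Definition requiv (p q : rpt) : Prop :=
  rvalid p /\ rvalid q /\ clos_refl_sym_trans rpt rgen p q.

Definition rcarrier := {A : set rpt | exists p, rvalid p /\ A = requiv p}.

Definition open_in_piece (i : I) (S : set (G i * 'rV[R]_(cw_dim C i))%type) :=
  exists O : set (G i * 'rV[R]_(cw_dim C i))%type,
    open O /\ S = O `&` [set ax | disk R _ ax.2].

Definition ropen (U : set rcarrier) : Prop :=
  forall i, open_in_piece
    [set ax | disk R _ ax.2 /\
              exists A : rcarrier, U A /\ sval A (existT _ i ax)].

Definition realization : space := Space ropen.
End Realization.

Definition cosheaf_rel (R : realType) (X : topologicalType) (I : Type)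
    (C : cw_structure R X I) (F : cosheaf C) (i j : I)
    (a2 : cs_sp F j) (a1 : cs_sp F i) : Prop :=
  exists p : cw_le C i j, a1 = cs_res p a2.

Definition cosheaf_realization (R : realType) (X : topologicalType) (I : Type)
    (C : cw_structure R X I) (F : cosheaf C) : space :=
  realization C (@cosheaf_rel R X I C F).

Definition homeomorphism (Y X : topologicalType) (f : Y -> X) : Prop :=
  exists g : X -> Y, cancel f g /\ cancel g f /\ continuous f /\ continuous g.

Definition cellular_refinement (R : realType) (X Y : topologicalType)
    (I J : Type) (CX : cw_structure R X I) (CY : cw_structure R Y J)
    (f : Y -> X) (fs : J -> I) : Prop :=
  homeomorphism f /\ forall j, f @` ocell CY j `<=` ocell CX (fs j).

Definition pullback_rel (R : realType) (X : topologicalType) (I J : Type)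
    (C : cw_structure R X I) (F : cosheaf C) (fs : J -> I) (j j' : J)
    (a2 : cs_sp F (fs j')) (a1 : cs_sp F (fs j)) : Prop :=
  exists p : cw_le C (fs j) (fs j'), a1 = cs_res p a2.

Definition pullback_realization (R : realType) (X Y : topologicalType)
    (I J : Type) (CX : cw_structure R X I) (CY : cw_structure R Y J)
    (F : cosheaf CX) (fs : J -> I) : space :=
  realization CY (G := fun j => cs_sp F (fs j)) (@pullback_rel R X I J CX F fs).

From mathcomp Require Import all_boot all_order all_algebra.
From mathcomp Require Import all_classical all_reals all_analysis.
From mathcomp Require Import lra.
From Stdlib Require Import Relation_Operators List.

Import Order.TTheory GRing.Theory Num.Theory.
Import numFieldNormedType.Exports.
Local Open Scope classical_set_scope.
Local Open Scope ring_scope.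
Set Implicit Arguments.
Unset Strict Implicit.
Unset Printing Implicit Defensive.

(* A point of the realization of F pulled back along a cellular map into X is
   determined by its germ: its image x in X together with its value in F(e),
   e the cell of X containing x; two points are identified exactly when their
   germs agree.  For a cellular refinement f, both |f^* F| and |F| are thus
   parametrized by the same germs, which gives mutually inverse bijections.
   Continuity is checked on each closed cell D^{d(j)}: by the tube lemma along
   the compact disks, using that a compact subset of a CW complex meets only
   finitely many open cells. *)

Section Disk.
Variable R : realType.

Lemma sqnorm_continuous n : continuous (@sqnorm R n).
Proof.
apply: continuous_big => [[x y]|k _]; first exact: add_continuous.
move=> v; apply: continuousM; exact: coord_continuous.
Qed.

Lemma closed_disk n : closed (disk R n).
Proof.
apply: (proj1 (continuous_closedP _) (@sqnorm_continuous n) [set x : R | x <= 1]).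
exact: closed_le.
Qed.

Lemma compact_disk n : compact (disk R n).
Proof.
apply: (@subclosed_compact _ _
  [set v : 'rV[R]_n | forall i, `[(-1 : R), 1]%classic (v ord0 i)] (@closed_disk n)).
  exact: (@rV_compact R n (fun=> `[(-1 : R), 1]%classic)
    (fun=> @segment_compact R (-1) 1)).
move=> v dv i /=; rewrite in_itv /=.
have : v ord0 i ^+ 2 <= sqnorm v.
  rewrite /sqnorm (bigD1 i) //= lerDl; apply: sumr_ge0 => k _; exact: sqr_ge0.
rewrite /disk /= in dv; move: (v ord0 i) => x le_x; apply/andP; split; nra.
Qed.

Lemma odisk_sub_disk n : odisk R n `<=` disk R n.
Proof. by move=> v /ltW. Qed.

Lemma sphere_sub_disk n : sphere R n `<=` disk R n.
Proof. by move=> v; rewrite /sphere /disk /= => ->. Qed.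

Lemma disk_odisk_or_sphere n v : disk R n v -> odisk R n v \/ sphere R n v.
Proof.
rewrite /disk /odisk /sphere /= le_eqVlt => /orP[/eqP->|->]; by [right|left].
Qed.

Lemma odisk0 n : odisk R n 0.
Proof. by rewrite /odisk /= /sqnorm big1 ?ltr01 // => k _; rewrite mxE expr0n. Qed.

(* Shrink a boundary point radially. *)
Lemma odisk_meets_nbhs n (y : 'rV[R]_n) (N : set 'rV[R]_n) :
  disk R n y -> nbhs y N -> exists w, odisk R n w /\ N w.
Proof.
move=> /disk_odisk_or_sphere [oy|sy] Ny.
  by exists y; split => //; exact: nbhs_singleton.
move/nbhs_ballP: Ny => [e e0 sub].
pose d := Num.min 1 (e / (2 * (`|y| + 1))).
have ny := normr_ge0 y.
have d0 : 0 < d by rewrite lt_min ltr01 /=; apply: divr_gt0 => //; lra.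
have d1 : d <= 1 by rewrite ge_min lexx.
have de : d * (2 * (`|y| + 1)) <= e.
  by rewrite -ler_pdivlMr ?ge_min ?lexx ?orbT //; lra.
exists ((1 - d) *: y); split.
  rewrite /odisk /=.
  have -> : sqnorm ((1 - d) *: y) = (1 - d) ^+ 2 * sqnorm y.
    by rewrite /sqnorm mulr_sumr; apply: eq_bigr => k _; rewrite mxE exprMn.
  rewrite sy mulr1; nra.
apply: sub; rewrite mx_norm_ball /ball_ /=.
have -> : y - (1 - d) *: y = d *: y by rewrite scalerBl scale1r opprB addrC subrK.
rewrite normrZ (gtr0_norm d0); nra.
Qed.

End Disk.

Section Topology.

Lemma fst_continuous (A B : topologicalType) : continuous (@fst A B).
Proof. by move=> x; exact: cvg_fst. Qed.

Lemma snd_continuous (A B : topologicalType) : continuous (@snd A B).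
Proof. by move=> x; exact: cvg_snd. Qed.

Lemma pair_continuous (T A B : topologicalType) (f : T -> A) (g : T -> B) :
  continuous f -> continuous g -> continuous (fun x => (f x, g x)).
Proof. by move=> cf cg x; apply: cvg_pair; [exact: cf | exact: cg]. Qed.

Lemma closed_setI_preimage (T U : topologicalType) (D : set T) (g : T -> U)
    (B : set U) :
  closed D -> {within D, continuous g} -> closed B -> closed (D `&` g @^-1` B).
Proof.
move=> cD cg cB.
have /closed_subspaceP [V cV e] := proj1 (continuous_closedP _) cg B cB.
by rewrite setIC -e; exact: closedI.
Qed.

(* The tube lemma, in its closed-projection form. *)
Lemma closed_fst_image (A B : topologicalType) (K : set B) (C : set (A * B)) :
  compact K -> closed C -> (forall ab, C ab -> K ab.2) -> closed (fst @` C).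
Proof.
move=> cK cC CK.
rewrite -[fst @` C]setCK; apply: open_closedC; rewrite openE => a /= Na.
have : \forall a' \near a, K `<=` (fun b => ~ C (a', b)).
  apply: (proj1 (compact_near_coveringP K) cK) => b Kb.
  have : nbhs (a, b) (~` C).
    apply: open_nbhs_nbhs; split; first by rewrite openC.
    by move=> Cab; apply: Na; exists (a, b).
  case=> [[P1 P2]] /= [nP1 nP2] sub.
  exists (P2, P1) => //= -[b' a'] /= [P2b P1a]; exact: (sub (a', b')).
apply: filterS => a' Ka' [[a'' b]] Cab /= ea; subst a''.
exact: (Ka' b (CK _ Cab)).
Qed.

Lemma closed_within_equalizer (T1 T2 Z : topologicalType) (D1 : set T1)
    (D2 : set T2) (g1 : T1 -> Z) (g2 : T2 -> Z) :
  hausdorff_space Z -> closed D1 -> closed D2 ->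
  {within D1, continuous g1} -> {within D2, continuous g2} ->
  closed [set p | D1 p.1 /\ D2 p.2 /\ g1 p.1 = g2 p.2].
Proof.
move=> hZ cD1 cD2 c1 c2.
rewrite -[X in closed X]setCK; apply: open_closedC; rewrite openE => -[y z] /= NE.
have [Dy|nDy] := pselect (D1 y); last first.
  exists (~` D1, setT) => /=; last by move=> [t1 t2] /= [nD _] [].
  by split; [apply: open_nbhs_nbhs; split; rewrite ?openC | exact: filterT].
have [Dz|nDz] := pselect (D2 z); last first.
  exists (setT, ~` D2) => /=; last by move=> [t1 t2] /= [_ nD] [_ []].
  by split; [exact: filterT | apply: open_nbhs_nbhs; split; rewrite ?openC].
have ne : g1 y != g2 z by apply/eqP => e; apply: NE.
move: hZ; rewrite open_hausdorff => /(_ _ _ ne) [[U1 U2]] /=.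
rewrite !inE => -[U1y U2z] [oU1 oU2 U0].
have W1 := proj1 (subspace_continuousP _ _) c1 y Dy U1 (open_nbhs_nbhs (conj oU1 U1y)).
have W2 := proj1 (subspace_continuousP _ _) c2 z Dz U2 (open_nbhs_nbhs (conj oU2 U2z)).
exists ([set t | D1 t -> U1 (g1 t)], [set t | D2 t -> U2 (g2 t)]) => //=.
move=> [t1 t2] /= [h1 h2] [d1 [d2 e]].
have : (U1 `&` U2) (g1 t1) by split; [exact: h1 | rewrite e; exact: h2].
by rewrite (_ : U1 `&` U2 = set0) //; apply/eqP.
Qed.

Lemma closed_list_union (T : topologicalType) (J : Type) (B : J -> set T)
    (L : list J) :
  (forall j, List.In j L -> closed (B j)) ->
  closed [set x | exists2 j, List.In j L & B j x].
Proof.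
elim: L => [_|j L IH cB].
  by rewrite (_ : [set x | _] = set0); [exact: closed0 | apply/seteqP; split => x // []].
have -> : [set x | exists2 j', List.In j' (j :: L) & B j' x] =
          B j `|` [set x | exists2 j', List.In j' L & B j' x].
  apply/seteqP; split => x.
    by move=> [j' [->|jL] Bx]; [left | right; exists j'].
  by move=> [Bx|[j' jL Bx]]; [exists j; first left | exists j'; first right].
by apply: closedU; [apply: cB; left | apply: IH => j' jL; apply: cB; right].
Qed.

(* Otherwise the complements of finite subsets of S generate a proper filter
   containing K, and no point can be a cluster point of it. *)
Lemma compact_discrete_finite (T : topologicalType) (K S : set T) :
  compact K -> S `<=` K -> (forall A, A `<=` S -> closed A) ->
  exists L : list T, S `<=` [set z | List.In z L].
Proof.
move=> cK SK cS.
pose Bl (L : list T) := S `\` [set z | List.In z L].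
have [[L BL0]|nL] := pselect (exists L, Bl L = set0).
  exists L => z Sz; apply: contrapT => nz.
  by have : Bl L z by []; rewrite BL0.
have nz L : Bl L !=set0.
  by apply: contrapT => /set0P/negP/negbNE/eqP BL0; apply: nL; exists L.
pose G := filter_from [set: list T] Bl.
have FG : Filter G.
  apply: filter_from_filter; first by exists nil.
  move=> L1 L2 _ _; exists (L1 ++ L2) => // z [Sz nz']; split; split => //.
  - by move=> L1z; apply: nz'; apply: in_or_app; left.
  - by move=> L2z; apply: nz'; apply: in_or_app; right.
have PG : ProperFilter G by apply: filter_from_proper => L _; exact: nz.
have GK : G K by exists nil => // z [Sz _]; exact: SK.
have [p [_ cp]] := cK G PG GK.
have oW : open (~` (S `\` [set p])) by rewrite openC; apply: cS => z [].
have Wp : (~` (S `\` [set p])) p by move=> [_ []].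
have Gp : G (Bl [:: p]) by exists [:: p].
have [z [[Sz nzp] Wz]] := cp _ _ Gp (open_nbhs_nbhs (conj oW Wp)).
by case: Wz; split => // ezp; apply: nzp; left.
Qed.

End Topology.

Section DiskTopology.
Variable R : realType.

(* A projection along the compact disk D^k of a closed set. *)
Lemma closed_disk_mismatch (A B Z : topologicalType) n k (phi : 'rV[R]_n -> Z)
    (psi : 'rV[R]_k -> Z) (rho : A -> B) (O : set (B * 'rV[R]_k)) :
  hausdorff_space Z -> {within disk R n, continuous phi} ->
  {within disk R k, continuous psi} -> continuous rho -> open O ->
  closed [set ay : A * 'rV[R]_n | exists w,
    [/\ disk R n ay.2, disk R k w, phi ay.2 = psi w & ~ O (rho ay.1, w)]].
Proof.
move=> hZ cphi cpsi crho oO.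
pose C := [set t : (A * 'rV[R]_n) * 'rV[R]_k |
  [set yw | disk R n yw.1 /\ disk R k yw.2 /\ phi yw.1 = psi yw.2] (t.1.2, t.2) /\
  (~` O) (rho t.1.1, t.2)].
set M := (X in closed X); have -> : M = fst @` C.
  apply/seteqP; split => [[a y] [w [dy dw e nO]]|_ [[[a y] w] [[dy [dw e]] nO] <-]].
    by exists ((a, y), w).
  by exists w.
apply: (@closed_fst_image _ _ (disk R k) C (@compact_disk R k)) => [|[? w] [[_ []]] //].
pose g1 (t : (A * 'rV[R]_n) * 'rV[R]_k) := (t.1.2, t.2).
pose g2 (t : (A * 'rV[R]_n) * 'rV[R]_k) := (rho t.1.1, t.2).
have c1 t := @fst_continuous (A * 'rV[R]_n)%type 'rV[R]_k t.
have c2 := @snd_continuous (A * 'rV[R]_n)%type 'rV[R]_k.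
have cg1 : continuous g1.
  apply: pair_continuous c2 => t.
  exact: (continuous_comp (c1 t) (@snd_continuous A 'rV[R]_n t.1)).
have cg2 : continuous g2.
  apply: pair_continuous c2 => t.
  exact: (continuous_comp (c1 t)
    (continuous_comp (@fst_continuous A 'rV[R]_n t.1) (crho t.1.1))).
apply: closedI.
  apply: (proj1 (continuous_closedP g1) cg1).
  exact: closed_within_equalizer hZ (@closed_disk R n) (@closed_disk R k) cphi cpsi.
exact: (proj1 (continuous_closedP g2) cg2 _ (open_closedC oO)).
Qed.

End DiskTopology.

Section Cells.
Context (R : realType) (Z : topologicalType) (J : Type) (C : cw_structure R Z J).

Definition cell_of (z : Z) : J := projT1 (cid (cw_cover _ _ _ C z)).
Definition cell_coord (z : Z) : 'rV[R]_(cw_dim C (cell_of z)) :=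
  projT1 (cid2 (projT2 (cid (cw_cover _ _ _ C z)))).

Lemma odisk_cell_coord z : odisk R _ (cell_coord z).
Proof. by rewrite /cell_coord; case: cid2. Qed.

Lemma char_cell_coord z : cw_char C _ (cell_coord z) = z.
Proof. by rewrite /cell_coord; case: cid2. Qed.

Lemma ocell_cell_of z : ocell C (cell_of z) z.
Proof. by exists (cell_coord z); [exact: odisk_cell_coord | exact: char_cell_coord]. Qed.

Lemma ocell_disjoint j k z : ocell C j z -> ocell C k z -> j = k.
Proof. exact: cw_disjoint. Qed.

Lemma cell_of_ocell j z : ocell C j z -> cell_of z = j.
Proof. by move=> ojz; apply: ocell_disjoint (ocell_cell_of z) ojz. Qed.

Lemma cell_of_char j w : odisk R _ w -> cell_of (cw_char C j w) = j.
Proof. by move=> ow; apply: cell_of_ocell; exists w. Qed.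

Lemma cw_le_cell_of_char j w : disk R _ w -> cw_le C (cell_of (cw_char C j w)) j.
Proof.
move=> /disk_odisk_or_sphere [ow|sw]; first by rewrite cell_of_char //; exact: rt_refl.
by apply: rt_step; exists (cw_char C j w); split; [exact: ocell_cell_of | exists w].
Qed.

(* A closed cell meets such a set in finitely many points (closure finiteness),
   which are closed since Z is Hausdorff. *)
Lemma closed_cellwise_subsingleton (A : set Z) :
  (forall z z', A z -> A z' -> cell_of z = cell_of z' -> z = z') -> closed A.
Proof.
move=> Asub; apply/(cw_weak _ _ _ C) => i.
have [s [_ hs]] := cw_closure_finite _ _ _ C i.
pose B l := disk R _ `&` cw_char C i @^-1` (A `&` ocell C l).
have -> : disk R _ `&` cw_char C i @^-1` A =
          [set w | exists2 l, List.In l (i :: s) & B l w].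
  apply/seteqP; split => [w [dw Aw]|w [l _ [dw [Aw _]]] //].
  have [ow|sw] := disk_odisk_or_sphere dw.
    by exists i; [left | split => //; split => //; exists w].
  have [l ls ol] := hs (cw_char C i w) (ex_intro2 _ _ w sw erefl).
  by exists l; [right | split => //; split].
apply: closed_list_union => l _; apply: closed_setI_preimage.
- exact: closed_disk.
- exact: cw_char_cont.
have [[z [Az oz]]|nA] := pselect (exists z, (A `&` ocell C l) z).
  have -> : A `&` ocell C l = [set z].
    apply/seteqP; split => [z' [Az' oz']|z' ->] //=.
    by apply: Asub => //; rewrite (cell_of_ocell oz) (cell_of_ocell oz').
  exact: accessible_closed_set1 (hausdorff_accessible (cw_hausdorff _ _ _ C)) z.
rewrite (_ : A `&` ocell C l = set0); first exact: closed0.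
by apply/seteqP; split => // z Az; apply: nA; exists z.
Qed.

Lemma compact_finite_cells (K : set Z) : compact K ->
  exists L : list J, forall z, K z -> List.In (cell_of z) L.
Proof.
move=> cK.
pose rep j : Z := if pselect (exists z, K z /\ ocell C j z) is left e
  then projT1 (cid e) else cw_char C j 0.
have rep_cell j : cell_of (rep j) = j.
  rewrite /rep; case: pselect => [e|_].
    by case: (cid e) => z /= [_ ozj]; exact: cell_of_ocell.
  exact/cell_of_char/odisk0.
have K_rep z : K z -> K (rep (cell_of z)).
  rewrite /rep; case: pselect => [e|ne] Kz; first by case: (cid e) => ? [].
  by case: ne; exists z; split => //; exact: ocell_cell_of.
pose S := [set z | K z /\ z = rep (cell_of z)].
have [L SL] : exists L : list Z, S `<=` [set z | List.In z L].
  apply: (compact_discrete_finite cK) => [z []//|A AS].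
  apply: closed_cellwise_subsingleton => z z' /AS [_ ez] /AS [_ ez'] e.
  by rewrite ez ez' e.
exists (List.map cell_of L) => z Kz; rewrite -[cell_of z]rep_cell.
by apply: List.in_map; apply: SL; split; [exact: K_rep | rewrite rep_cell].
Qed.

End Cells.

Section CWOver.
Context (R : realType) (X : topologicalType) (I : Type) (CX : cw_structure R X I)
  (F : cosheaf CX).

Lemma cs_res_irr i j (P Q : cw_le CX i j) (a : cs_sp F j) : cs_res P a = cs_res Q a.
Proof. by rewrite (Prop_irrelevance P Q). Qed.

Lemma cs_res_trans i j k (P : cw_le CX i j) (Q : cw_le CX j k) (T : cw_le CX i k)
    (a : cs_sp F k) :
  cs_res P (cs_res Q a) = cs_res T a.
Proof. by rewrite -(cs_res_comp (rt_trans _ _ _ _ _ P Q)); exact: cs_res_irr. Qed.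

(* Both |F| and |f^* F| are realizations of F pulled back along a CW complex
   mapped into X; [ov_map] and [ov_cell_map] play the roles of f and f_*. *)
Record cw_over := CWOver {
  ov_space : topologicalType;
  ov_cells : Type;
  ov_cw : cw_structure R ov_space ov_cells;
  ov_map : ov_space -> X;
  ov_cell_map : ov_cells -> I }.

Section Realization.
Variable S : cw_over.

Definition ov_fiber (j : ov_cells S) := cs_sp F (ov_cell_map j).
Definition ov_rel := @pullback_rel R X I (ov_cells S) CX F (@ov_cell_map S).
Definition ov_point := rpt (ov_cw S) ov_fiber.
Definition ov_equiv := @requiv R _ _ (ov_cw S) ov_fiber ov_rel.
Definition ov_realization := @rcarrier R _ _ (ov_cw S) ov_fiber ov_rel.
Definition ov_open := @ropen R _ _ (ov_cw S) ov_fiber ov_rel.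
Definition ov_valid (p : ov_point) := @rvalid R _ _ (ov_cw S) ov_fiber p.

Definition ov_pt j (a : ov_fiber j) (w : 'rV[R]_(cw_dim (ov_cw S) j)) : ov_point :=
  existT _ j (a, w).

Definition pt_cell (p : ov_point) : ov_cells S := projT1 p.
Definition pt_val (p : ov_point) : ov_fiber (pt_cell p) := (projT2 p).1.
Definition pt_loc (p : ov_point) : ov_space S := cw_char (ov_cw S) _ (projT2 p).2.

Record cellular_over : Prop := {
  ov_map_inj : injective (@ov_map S);
  ov_map_ocell : forall j w, odisk R _ w ->
    ocell CX (ov_cell_map j) (ov_map (cw_char (ov_cw S) j w));
  ov_cell_map_gen : forall j' j, cw_gen (ov_cw S) j' j ->
    cw_le CX (ov_cell_map j') (ov_cell_map j) }.

End Realization.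

(* [k] can only be the cell of X containing the common image, so this
   compares the values of [p] and [q] restricted to F(k). *)
Definition same_germ (S T : cw_over) (p : ov_point S) (q : ov_point T) :=
  ov_map (pt_loc p) = ov_map (pt_loc q) /\
  forall k (P : cw_le CX k (ov_cell_map (pt_cell p)))
    (Q : cw_le CX k (ov_cell_map (pt_cell q))),
  ocell CX k (ov_map (pt_loc p)) -> cs_res P (pt_val p) = cs_res Q (pt_val q).

Section Cellular.
Variables (S : cw_over) (gS : cellular_over S).

Lemma cw_le_ov_cell_map j' j :
  cw_le (ov_cw S) j' j -> cw_le CX (ov_cell_map j') (ov_cell_map j).
Proof.
elim=> [? ? /(ov_cell_map_gen gS) //|?|? ? ? _ h1 _ h2]; first exact: rt_refl.
exact: rt_trans h1 h2.
Qed.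

Lemma ov_cell_map_cell_of z : ov_cell_map (cell_of (ov_cw S) z) = cell_of CX (ov_map z).
Proof.
apply/esym/cell_of_ocell.
by have := ov_map_ocell gS (odisk_cell_coord (ov_cw S) z); rewrite char_cell_coord.
Qed.

Lemma cw_le_ov_cell_of_loc (p : ov_point S) : ov_valid p ->
  cw_le CX (ov_cell_map (cell_of (ov_cw S) (pt_loc p))) (ov_cell_map (pt_cell p)).
Proof. by move=> vp; apply: cw_le_ov_cell_map; exact: cw_le_cell_of_char. Qed.

Lemma cw_le_cell_of_loc (p : ov_point S) : ov_valid p ->
  cw_le CX (cell_of CX (ov_map (pt_loc p))) (ov_cell_map (pt_cell p)).
Proof. by rewrite -ov_cell_map_cell_of; exact: cw_le_ov_cell_of_loc. Qed.

End Cellular.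

Lemma same_germ_refl S (p : ov_point S) : same_germ p p.
Proof. by split => // k P Q _; exact: cs_res_irr. Qed.

Lemma same_germ_sym S T (p : ov_point S) (q : ov_point T) :
  same_germ p q -> same_germ q p.
Proof. by move=> [e h]; split => // k P Q; rewrite -e => okx; rewrite (h k Q P). Qed.

Lemma same_germ_trans S T U (p : ov_point S) (q : ov_point T) (r : ov_point U) :
  cellular_over T -> ov_valid q -> same_germ p q -> same_germ q r -> same_germ p r.
Proof.
move=> gT vq [e1 h1] [e2 h2]; split => [|k P Q okx]; first by rewrite e1.
have M : cw_le CX k (ov_cell_map (pt_cell q)).
  by rewrite -(cell_of_ocell okx) e1; exact: cw_le_cell_of_loc.
by rewrite (h1 k P M okx); apply: h2; rewrite -e1.
Qed.

Section Equivalence.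
Variables (S : cw_over) (gS : cellular_over S).

Lemma ov_equiv_sym (p q : ov_point S) : ov_equiv p q -> ov_equiv q p.
Proof. by case=> vp [vq h]; split => //; split => //; exact: rst_sym. Qed.

Lemma ov_equiv_trans (p q r : ov_point S) :
  ov_equiv p q -> ov_equiv q r -> ov_equiv p r.
Proof.
by case=> vp [vq h1] [_ [vr h2]]; split => //; split => //; exact: rst_trans h1 h2.
Qed.

Lemma ov_equiv_refl (p : ov_point S) : ov_valid p -> ov_equiv p p.
Proof. by move=> vp; split => //; split => //; exact: rst_refl. Qed.

Lemma ov_equiv_same_germ (p q : ov_point S) :
  ov_equiv p q -> [/\ ov_valid p, ov_valid q & same_germ p q].
Proof.
case=> vp [vq h].
suff [<-|//] : p = q \/ [/\ ov_valid p, ov_valid q & same_germ p q].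
  by split => //; exact: same_germ_refl.
elim: h => {p q vp vq} [p q|p|p q _ IH|p q r _ IH1 _ IH2].
- case=> _ [dp [sq [e [P ea]]]]; right; split => //; first exact: sphere_sub_disk.
  split=> [|k P' Q _]; first by rewrite /pt_loc e.
  by rewrite /pt_val ea cs_res_trans.
- by left.
- by case: IH => [->|[vp vq h]]; [left | right; split => //; exact: same_germ_sym].
- case: IH1 IH2 => [->|[vp vq h1]] [<-|[vq' vr h2]]; [by left|by right|by right|].
  by right; split => //; exact: same_germ_trans h1 h2.
Qed.

Lemma ov_equiv_odisk (p : ov_point S) k w
    (P : cw_le CX (ov_cell_map k) (ov_cell_map (pt_cell p))) :
  ov_valid p -> odisk R _ w -> cw_char (ov_cw S) k w = pt_loc p ->
  ov_equiv p (ov_pt (cs_res P (pt_val p)) w).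
Proof.
case: p P => j [a y] P vy ow; rewrite /pt_loc /= => e.
have vq : ov_valid (ov_pt (cs_res P a) w) by exact: odisk_sub_disk.
have [oy|sy] := disk_odisk_or_sphere vy.
  have ekj : k = j.
    by apply: ocell_disjoint (ex_intro2 _ _ w ow e) (ex_intro2 _ _ y oy erefl).
  subst k; have ewy : w = y by exact: cw_char_inj ow oy e.
  by subst w; rewrite cs_res_id; exact: ov_equiv_refl.
apply: ov_equiv_sym; split => //; split => //; apply: rst_step.
split; last split; [|exact: odisk_sub_disk|split => //; split => //; by exists P].
apply: t_step; exists (cw_char (ov_cw S) j y); split; first by rewrite -e; exists w.
by exists y.
Qed.

Lemma same_germ_ov_equiv (p q : ov_point S) :
  ov_valid p -> ov_valid q -> same_germ p q -> ov_equiv p q.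
Proof.
move=> vp vq [e h].
have el : pt_loc p = pt_loc q := ov_map_inj gS e.
pose k := cell_of (ov_cw S) (pt_loc p); pose w := cell_coord (ov_cw S) (pt_loc p).
have P := cw_le_ov_cell_of_loc gS vp.
have Q : cw_le CX (ov_cell_map k) (ov_cell_map (pt_cell q)).
  by rewrite /k el; exact: cw_le_ov_cell_of_loc.
have ok : ocell CX (ov_cell_map k) (ov_map (pt_loc p)).
  have := ov_map_ocell gS (odisk_cell_coord (ov_cw S) (pt_loc p)).
  by rewrite char_cell_coord.
have ep := ov_equiv_odisk P vp (odisk_cell_coord _ _) (char_cell_coord _ _).
have eq : ov_equiv q (ov_pt (cs_res Q (pt_val q)) w).
  by apply: ov_equiv_odisk vq (odisk_cell_coord _ _) _; rewrite char_cell_coord.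
by apply: ov_equiv_trans ep _; rewrite (h _ P Q ok); exact: ov_equiv_sym.
Qed.

End Equivalence.

Section Classes.
Variable S : cw_over.

Definition ov_class (p : ov_point S) (vp : ov_valid p) : ov_realization S :=
  exist _ (ov_equiv p) (ex_intro _ p (conj vp erefl)).

Lemma ov_class_eq (p q : ov_point S) (vp : ov_valid p) (vq : ov_valid q) :
  ov_equiv p q -> ov_class vp = ov_class vq.
Proof.
move=> h; apply: eq_exist; apply: funext => r; apply: propext; split => h'.
  exact: ov_equiv_trans (ov_equiv_sym h) h'.
exact: ov_equiv_trans h h'.
Qed.

Lemma mem_ov_class (p : ov_point S) (vp : ov_valid p) : sval (ov_class vp) p.
Proof. exact: ov_equiv_refl. Qed.

Lemma ov_classP (A : ov_realization S) (q : ov_point S) :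
  sval A q -> exists vq : ov_valid q, A = ov_class vq.
Proof.
case: A => A [p [vp eA]] /= Aq; rewrite eA in Aq; have [_ [vq _]] := Aq.
by exists vq; rewrite -(ov_class_eq vp vq Aq); exact: eq_exist.
Qed.

Definition ov_rep (A : ov_realization S) : ov_point S := projT1 (cid (svalP A)).

Lemma ov_rep_valid (A : ov_realization S) : ov_valid (ov_rep A).
Proof. exact: (projT2 (cid (svalP A))).1. Qed.

Lemma ov_class_rep (A : ov_realization S) : ov_class (ov_rep_valid A) = A.
Proof.
by case: A => A hA; apply: eq_exist; rewrite /ov_rep /=; case: cid => p /= [_ ->].
Qed.

End Classes.

Section Transfer.
Variables (S T : cw_over) (gS : cellular_over S) (gT : cellular_over T).
Variables (m : ov_space S -> ov_space T) (hm : forall z, ov_map (m z) = ov_map z).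

Lemma cw_le_transfer (p : ov_point S) : ov_valid p ->
  cw_le CX (ov_cell_map (cell_of (ov_cw T) (m (pt_loc p)))) (ov_cell_map (pt_cell p)).
Proof. by rewrite (ov_cell_map_cell_of gT) hm; exact: cw_le_cell_of_loc. Qed.

Definition transfer_point (p : ov_point S) (vp : ov_valid p) : ov_point T :=
  ov_pt (cs_res (cw_le_transfer vp) (pt_val p)) (cell_coord (ov_cw T) (m (pt_loc p))).

Lemma transfer_point_valid (p : ov_point S) (vp : ov_valid p) :
  ov_valid (@transfer_point p vp).
Proof. exact/odisk_sub_disk/odisk_cell_coord. Qed.

Lemma same_germ_transfer_point (p : ov_point S) (vp : ov_valid p) :
  same_germ p (@transfer_point p vp).
Proof.
split=> [|k P Q _]; first by rewrite /pt_loc /= char_cell_coord hm.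
by rewrite /pt_val /= cs_res_trans.
Qed.

Definition transfer (A : ov_realization S) : ov_realization T :=
  ov_class (transfer_point_valid (ov_rep_valid A)).

Lemma transfer_class (p : ov_point S) (q : ov_point T) (vp : ov_valid p)
    (vq : ov_valid q) :
  same_germ p q -> transfer (ov_class vp) = ov_class vq.
Proof.
move=> pq; rewrite /transfer; set r := ov_rep _; set vr := ov_rep_valid _.
have pr : ov_equiv p r by have := mem_ov_class vr; rewrite ov_class_rep.
have [_ _ rp] := ov_equiv_same_germ gS (ov_equiv_sym pr).
apply: ov_class_eq; apply: (same_germ_ov_equiv gT (transfer_point_valid _) vq).
apply: (same_germ_trans gS vp _ pq).
exact: same_germ_trans gS vr (same_germ_sym (same_germ_transfer_point vr)) rp.
Qed.

End Transfer.

Lemma transfer_cancel S T gS gT m hm m' hm' :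
  cancel (@transfer S T gS gT m hm) (@transfer T S gT gS m' hm').
Proof.
move=> A; rewrite -(ov_class_rep A).
have vt := transfer_point_valid gS gT hm (ov_rep_valid A).
have germ := same_germ_transfer_point gS gT hm (ov_rep_valid A).
rewrite (transfer_class gS gT hm _ vt germ).
by rewrite (transfer_class gT gS hm' vt (ov_rep_valid A) (same_germ_sym germ)).
Qed.

Lemma ov_openP (T : cw_over) (U : set (ov_realization T)) : ov_open U ->
  forall k, exists2 O : set (ov_fiber k * 'rV[R]_(cw_dim (ov_cw T) k)), open O &
    forall b w (dw : disk R _ w), O (b, w) <-> U (ov_class (p := ov_pt b w) dw).
Proof.
move=> oU k; have [V [oV eV]] := oU k; exists V => // b w dw.
move/seteqP: eV => [sub1 sub2]; split => [Obw|Ubw].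
  have [_ [A [UA Abw]]] := sub2 (b, w) (conj Obw dw).
  have [vq eA] := ov_classP Abw; rewrite eA in UA.
  by rewrite (Prop_irrelevance dw vq).
have [] // := sub1 (b, w).
by split => //; exists (ov_class (p := ov_pt b w) dw); split => //; exact: mem_ov_class.
Qed.

Section Continuity.
Variables (S T : cw_over) (gS : cellular_over S) (gT : cellular_over T).
Variables (m : ov_space S -> ov_space T) (hm : forall z, ov_map (m z) = ov_map z).

Lemma same_germ_restrict j (a : ov_fiber j) y k
    (P : cw_le CX (ov_cell_map k) (ov_cell_map j)) w :
  cw_char (ov_cw T) k w = m (cw_char (ov_cw S) j y) ->
  same_germ (ov_pt a y) (ov_pt (cs_res P a) w).
Proof.
move=> e; split=> [|k' P' Q _]; first by rewrite /pt_loc /= e hm.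
by rewrite /pt_val /= cs_res_trans.
Qed.

(* Openness is checked cell by cell: the complement of the preimage in the
   j-th piece is the finite union, over the cells k of T meeting the image of
   the closed cell j, of closed mismatch sets. *)
Lemma transfer_open (U : set (ov_realization T)) j (L : list (ov_cells T)) :
  ov_open U ->
  (forall k, List.In k L -> cw_le CX (ov_cell_map k) (ov_cell_map j)) ->
  (forall y, disk R _ y -> exists2 k, List.In k L &
     exists2 w, disk R _ w & cw_char (ov_cw T) k w = m (cw_char (ov_cw S) j y)) ->
  {within disk R _, continuous (m \o cw_char (ov_cw S) j)} ->
  open_in_piece (C := ov_cw S) (G := @ov_fiber S) (i := j)
    [set ay | disk R _ ay.2 /\
      exists A, U (transfer gS gT hm A) /\ sval A (existT _ j ay)].
Proof.
move=> oU hL hcov hmc.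
pose O k := s2val (cid2 (ov_openP oU k)).
have oO k : open (O k) := s2valP (cid2 (ov_openP oU k)).
have eO k : forall b w (dw : disk R _ w),
    O k (b, w) <-> U (ov_class (p := ov_pt b w) dw).
  exact: s2valP' (cid2 (ov_openP oU k)).
pose Bad k := if pselect (cw_le CX (ov_cell_map k) (ov_cell_map j)) is left P then
  [set ay : ov_fiber j * 'rV[R]_(cw_dim (ov_cw S) j) | exists w,
    [/\ disk R _ ay.2, disk R _ w,
      (m \o cw_char (ov_cw S) j) ay.2 = cw_char (ov_cw T) k w
      & ~ O k (cs_res P ay.1, w)]]
  else set0.
exists (~` [set ay | exists2 k, List.In k L & Bad k ay]); split.
  rewrite openC; apply: closed_list_union => k _; rewrite /Bad.
  case: pselect => [P|_]; last exact: closed0.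
  apply: closed_disk_mismatch (cw_hausdorff _ _ _ (ov_cw T)) hmc _ _ (oO k).
    exact: cw_char_cont.
  exact: cs_res_cont.
apply/seteqP; split => -[a y] /=.
- move=> [dy [A [UA Aay]]]; split => // -[k _]; rewrite /Bad.
  case: pselect => [P|//] [w [_ dw ew nO]]; apply: nO; apply/(eO k _ w dw).
  have [vp eA] := ov_classP Aay; rewrite eA in UA.
  by rewrite -(transfer_class (q := ov_pt (cs_res P a) w) gS gT hm vp dw
    (same_germ_restrict a P (esym ew))).
- move=> [nBad dy]; split => //; exists (ov_class (p := ov_pt a y) dy).
  split; last exact: mem_ov_class.
  have [k kL [w dw ew]] := hcov y dy.
  apply: contrapT => nU; apply: nBad; exists k => //; rewrite /Bad.
  case: pselect => [P|]; last by case; exact: hL.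
  exists w; split => // /(eO k _ w dw); apply: contra_not nU => Ut.
  by rewrite (transfer_class (p := ov_pt a y) (q := ov_pt (cs_res P a) w)
    gS gT hm dy dw (same_germ_restrict a P ew)).
Qed.

End Continuity.

Lemma ov_realization_homeomorphic (S T : cw_over) (gS : cellular_over S)
    (gT : cellular_over T) (m : ov_space S -> ov_space T) (m' : ov_space T -> ov_space S)
    (hm : forall z, ov_map (m z) = ov_map z) (hm' : forall z, ov_map (m' z) = ov_map z) :
  (forall U, ov_open U -> ov_open (transfer gS gT hm @^-1` U)) ->
  (forall U, ov_open U -> ov_open (transfer gT gS hm' @^-1` U)) ->
  homeomorphic (realization (ov_cw S) (@ov_rel S)) (realization (ov_cw T) (@ov_rel T)).
Proof.
move=> oST oTS; exists (transfer gS gT hm), (transfer gT gS hm').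
by split; [|split; [|split]];
  [exact: transfer_cancel | exact: transfer_cancel | exact: oST | exact: oTS].
Qed.

End CWOver.

Section Refinement.
Context (R : realType) (X Y : topologicalType) (I J : Type)
  (CX : cw_structure R X I) (CY : cw_structure R Y J) (F : cosheaf CX)
  (f : Y -> X) (fs : J -> I) (g : X -> Y) (fK : cancel f g) (gK : cancel g f)
  (cf : continuous f) (cg : continuous g)
  (hcell : forall j, f @` ocell CY j `<=` ocell CX (fs j)).

Lemma ocell_refinement j w : odisk R _ w -> ocell CX (fs j) (f (cw_char CY j w)).
Proof. by move=> ow; apply: hcell; exists (cw_char CY j w) => //; exists w. Qed.

Lemma continuous_refinement_char j :
  {within disk R (cw_dim CY j), continuous (f \o cw_char CY j)}.
Proof.
by apply: within_continuous_comp; [move=> x _; exact: cf | exact: cw_char_cont].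
Qed.

(* f maps the closed cell j into the closed cell f_* j: the latter is compact,
   hence closed, and contains the image of the dense open disk. *)
Lemma refinement_closed_cell j y : disk R _ y ->
  exists2 z, disk R _ z & cw_char CX (fs j) z = f (cw_char CY j y).
Proof.
move=> dy.
pose K := cw_char CX (fs j) @` disk R (cw_dim CX (fs j)).
have cK : closed K.
  apply: compact_closed; first exact: (cw_hausdorff _ _ _ CX).
  by apply: continuous_compact; [exact: cw_char_cont | exact: compact_disk].
suff [_ [z dz e]] : (disk R _ `&` (f \o cw_char CY j) @^-1` K) y by exists z.
have cQ := closed_setI_preimage (@closed_disk R _) (@continuous_refinement_char j) cK.
apply: cQ => B nB.
have [w [ow Bw]] := odisk_meets_nbhs dy nB.
exists w; split => //; split; first exact: odisk_sub_disk.
have [z oz e] := ocell_refinement ow.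
by exists z => //; exact: odisk_sub_disk.
Qed.

Definition ov_refinement := CWOver CY f fs.
Definition ov_self := CWOver CX id id.

Lemma cellular_over_refinement : cellular_over CX ov_refinement.
Proof.
split => /=; [exact: can_inj fK | exact: ocell_refinement |].
move=> j' j [x [ocx [s ss ex]]].
have [z dz ez] := refinement_closed_cell (sphere_sub_disk ss).
have oc' : ocell CX (fs j') (f x) by apply: hcell; exists x.
have [oz|sz] := disk_odisk_or_sphere dz.
  suff -> : fs j' = fs j by exact: rt_refl.
  by apply: ocell_disjoint oc' _; exists z => //; rewrite ez ex.
by apply: rt_step; exists (f x); split => //; exists z => //; rewrite ez ex.
Qed.

Lemma cellular_over_self : cellular_over CX ov_self.
Proof. by split => //= [j w ow|j' j]; [exists w | exact: rt_step]. Qed.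

Lemma transfer_refinement_open (U : set (ov_realization F ov_self)) :
  ov_open U ->
  ov_open (transfer cellular_over_refinement cellular_over_self (m := f) (fun=> erefl)
    @^-1` U).
Proof.
move=> oU j.
apply: (transfer_open cellular_over_refinement cellular_over_self (m := f) (fun=> erefl)
  (j := j) (L := [:: fs j]) oU).
- by move=> k [<-|[]]; exact: rt_refl.
- move=> y dy; exists (fs j); first by left.
  by have [z dz e] := refinement_closed_cell dy; exists z.
- exact: continuous_refinement_char.
Qed.

(* A closed cell of X is compact, so its image under g meets only finitely
   many cells of Y. *)
Lemma transfer_self_open (U : set (ov_realization F ov_refinement)) :
  ov_open U ->
  ov_open (transfer cellular_over_self cellular_over_refinement (m := g)
    (fun x => gK x) @^-1` U).
Proof.
move=> oU j.
pose K := g @` (cw_char CX j @` disk R (cw_dim CX j)).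
have cK : compact K.
  apply: continuous_compact; first by apply: continuous_subspaceT => x; exact: cg.
  by apply: continuous_compact; [exact: cw_char_cont | exact: compact_disk].
have [L0 hL0] := compact_finite_cells CY cK.
apply: (transfer_open cellular_over_self cellular_over_refinement (m := g) (fun x => gK x)
  (j := j) (L := List.filter (fun k => `[< cw_le CX (fs k) j >]) L0) oU).
- by move=> k /filter_In [_ /asboolP].
- move=> y dy; pose z := g (cw_char CX j y).
  have Kz : K z by exists (cw_char CX j y) => //; exists y.
  exists (cell_of CY z).
    apply/filter_In; split; first exact: hL0.
    apply/asboolP; have /= -> := ov_cell_map_cell_of cellular_over_refinement z.
    by rewrite /z gK; exact: cw_le_cell_of_char.
  exists (cell_coord CY z); first exact/odisk_sub_disk/odisk_cell_coord.
  exact: char_cell_coord.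
- apply: within_continuous_comp; last exact: cw_char_cont.
  by move=> x _; exact: cg.
Qed.

End Refinement.

Theorem mainTheorem16 (R : realType) (X Y : topologicalType) (I J : Type)
    (CX : cw_structure R X I) (CY : cw_structure R Y J)
    (f : Y -> X) (fs : J -> I)
    (hf : cellular_refinement CX CY f fs)
    (F : cosheaf CX) :
  homeomorphic (pullback_realization CY F fs) (cosheaf_realization F).
Proof.
case: hf => [[g [fK [gK [cf cg]]]] hcell].
exact: ov_realization_homeomorphic (transfer_refinement_open (F := F) fK cf hcell)
  (transfer_self_open (F := F) fK gK cf cg hcell).
Qed.
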